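(* Under the setting of Theorem 2, let $d_{\min}=\min_{1\le s<j\le r+1}(\lambda_s-\lambda_j)$. Then: if $(i_1,\dots,i_r)=(1,\dots,r)$, $\lambda_{\min}(\mathrm{hess}\,g(\mathbf{X}_\Omega))\ge\tfrac12 d_{\min}$; if $\{i_1,\dots,i_r\}=\{1,\dots,r\}$ but $(i_1,\dots,i_r)\ne(1,\dots,r)$, $\lambda_{\min}(\mathrm{hess}\,g(\mathbf{X}_\Omega))\le-\tfrac12 d_{\min}$; if $\{i_1,\dots,i_r\}\ne\{1,\dots,r\}$, $\lambda_{\min}(\mathrm{hess}\,g(\mathbf{X}_\Omega))\le-d_{\min}$.
   Context: $\mathbf{M}\in\mathbb{R}^{N\times N}$ symmetric with eigenvalues $\lambda_1>\cdots>\lambda_r>\lambda_{r+1}\ge\cdots\ge\lambda_N$ and orthonormal eigenvectors $\bm{x}_1,\dots,\bm{x}_N$; for distinct $i_1,\dots,i_r\in[N]$, $\mathbf{X}_\Omega=[\bm{x}_{i_1},\dots,\bm{x}_{i_r}]$. $\mathrm{St}(N,r)=\{\mathbf{X}:\mathbf{X}^\top\mathbf{X}=\mathbf{I}_r\}$, $\mathbf{N}=\mathrm{diag}(r,r-1,\dots,1)$, $g(\mathbf{X})=-\tfrac12\mathrm{tr}(\mathbf{X}^\top\mathbf{M}\mathbf{X}\mathbf{N})$. $\mathcal{T}_{\mathbf{X}}\mathrm{St}(N,r)=\{\mathbf{U}:\mathbf{X}^\top\mathbf{U}+\mathbf{U}^\top\mathbf{X}=\mathbf{0}\}$; $\mathrm{hess}\,g(\mathbf{X})[\mathbf{U},\mathbf{U}]=\langle\mathbf{X}^\top\mathbf{M}\mathbf{X},\mathbf{U}^\top\mathbf{U}\mathbf{N}\rangle-\langle\mathbf{M},\mathbf{U}\mathbf{N}\mathbf{U}^\top\rangle$,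 and $\lambda_{\min}(\mathrm{hess}\,g(\mathbf{X}))=\min\{\mathrm{hess}\,g(\mathbf{X})[\mathbf{U},\mathbf{U}]:\mathbf{U}\in\mathcal{T}_{\mathbf{X}}\mathrm{St}(N,r),\|\mathbf{U}\|_F=1\}$. *)

From HB Require Import structures.
From mathcomp Require Import all_boot all_order all_algebra.
From mathcomp Require Import all_classical all_reals.
Set Implicit Arguments. Unset Strict Implicit. Unset Printing Implicit Defensive.
Import Order.TTheory GRing.Theory Num.Theory.
Local Open Scope ring_scope.
Local Open Scope classical_set_scope.

Section Defs.
Variable R : realType.

Definition frob {m n : nat} (A B : 'M[R]_(m, n)) : R := \tr (A^T *m B).

Definition frob_norm {m n : nat} (A : 'M[R]_(m, n)) : R :=
  Num.sqrt (\sum_(i < m) \sum_(j < n) A i j ^+ 2).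

(* N = diag(r, r-1, ..., 1) (0-based index i carries weight r - i) *)
Definition Nw (r : nat) : 'M[R]_r := diag_mx (\row_(i < r) (r - i)%:R).

Definition g {Nd r : nat} (M : 'M[R]_Nd) (X : 'M[R]_(Nd, r)) : R :=
  - (1/2) * \tr (X^T *m M *m X *m Nw r).

(* tangent space of the Stiefel manifold at X *)
Definition tangent {Nd r : nat} (X : 'M[R]_(Nd, r)) : set 'M[R]_(Nd, r) :=
  [set U | X^T *m U + U^T *m X = 0].

Definition hess_g {Nd r : nat} (M : 'M[R]_Nd) (X U : 'M[R]_(Nd, r)) : R :=
  frob (X^T *m M *m X) (U^T *m U *m Nw r) - frob M (U *m Nw r *m U^T).

(* lambda_min(hess g(X)) = min over unit tangent U of hess g(X)[U,U],
   expressed as the infimum (the minimum is attained by compactness). *)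
Definition lambda_min_hess {Nd r : nat} (M : 'M[R]_Nd) (X : 'M[R]_(Nd, r)) : R :=
  inf [set hess_g M X U | U in [set U | tangent X U /\ frob_norm U = 1]].

Definition X_Omega {Nd r : nat} (P : 'M[R]_Nd) (idx : 'I_r -> 'I_Nd) : 'M[R]_(Nd, r) :=
  \matrix_(a < Nd, b < r) P a (idx b).

(* d_min = min_{1 <= s < j <= r+1} (lambda_s - lambda_j)  (0-based: s < j <= r) *)
Definition d_min {Nd : nat} (r : nat) (lam : 'I_Nd -> R) : R :=
  inf [set d : R | exists s j : 'I_Nd, [/\ (s < j)%N, (j <= r)%N & d = lam s - lam j]].

End Defs.

(* Writing a tangent vector as U = P C in the eigenbasis P of M, the Hessian
   becomes the diagonal quadratic form
       hess g(X_Omega)[P C, P C] = sum_(k,b) (r - b) (lam_(i_b) - lam_k) C_kb^2,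
   the unit sphere becomes sum C_kb^2 = 1, and tangency becomes the
   antisymmetry C_(i_a) b = - C_(i_b) a (section EigenCoordinates).
   With the weights w_b = r - b of N, the three cases are then elementary
   (section CriticalPoints):
   - for (i_b) = (1, ..., r), pairing the antisymmetric entries (a, b), (b, a)
     gives each pair the coefficient (w_a - w_b)(lam_a - lam_b) >= d_min, and
     unselected rows k > r have coefficients >= d_min, so the form is
     >= d_min / 2;
   - for a permutation of (1, ..., r) with an inversion a < b, i_b < i_a, the
     unit tangent vector (e_(i_a) e_b^T - e_(i_b) e_a^T) / sqrt 2 has value
     (w_a - w_b)(lam_(i_a) - lam_(i_b)) / 2 <= - d_min / 2;
   - if {i_b} <> {1, ..., r}, some k0 <= r is unselected and some i_b0 > r is
     selected, and e_k0 e_b0^T has value w_b0 (lam_(i_b0) - lam_k0) <= - d_min.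
   The upper bounds need the Hessian values to be bounded below, which holds
   since the form has finitely many coefficients. *)

From mathcomp Require Import all_boot all_order all_algebra.
From mathcomp Require Import all_classical all_reals.
From mathcomp Require Import ring lra zify.
Set Implicit Arguments. Unset Strict Implicit. Unset Printing Implicit Defensive.
Import Order.TTheory GRing.Theory Num.Theory.
Local Open Scope ring_scope.
Local Open Scope classical_set_scope.

(* A strictly increasing self-map of 'I_n is the identity: values can neither
   lag behind nor run ahead of their arguments. *)
Lemma ord_incr_id n (f : 'I_n -> 'I_n) :
  {homo f : a b / (a < b)%N} -> forall b, f b = b.
Proof.
move=> f_incr b; apply: ord_inj.
have above k (c : 'I_n) : (k <= c)%N -> (k <= f c)%N.
  elim: k c => // k IHk c lt_kc.
  have lt_kn : (k < n)%N by have := ltn_ord c; lia.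
  have := f_incr (Ordinal lt_kn) c lt_kc; have := IHk (Ordinal lt_kn) (leqnn k).
  lia.
have below k (c : 'I_n) : (k + c < n)%N -> (k + f c < n)%N.
  elim: k c => [|k IHk] c lt_kcn; first exact: ltn_ord.
  have lt_cn : (c.+1 < n)%N by lia.
  have := f_incr c (Ordinal lt_cn) (ltnSn c); have := IHk (Ordinal lt_cn).
  rewrite /=; lia.
have := above b b (leqnn b); have := below (n - b.+1)%N b.
have := ltn_ord b; lia.
Qed.

Section QuadraticForms.
Variables (R : realType) (m n : nat).
Implicit Types (F : 'I_m -> 'I_n -> R) (C : 'M[R]_(m, n)).

(* The diagonal quadratic form  C |-> sum_(i,j) F i j * C_ij^2  on matrices;
   the Hessian becomes such a form in eigenvector coordinates. *)
Definition wsq F C : R := \sum_(i < m) \sum_(j < n) F i j * C i j ^+ 2.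

Lemma frob_normE C : frob_norm C = Num.sqrt (wsq (fun _ _ => 1) C).
Proof. by congr Num.sqrt; apply: eq_bigr => i _; apply: eq_bigr => j _; rewrite mul1r. Qed.

Lemma wsq_le_coef F G C : (forall i j, F i j <= G i j) -> wsq F C <= wsq G C.
Proof.
by move=> le_FG; apply: ler_sum => i _; apply: ler_sum => j _; rewrite ler_wpM2r ?sqr_ge0.
Qed.

Lemma wsq_scale c C : c * wsq (fun _ _ => 1) C = wsq (fun _ _ => c) C.
Proof.
rewrite mulr_sumr; apply: eq_bigr => i _; rewrite mulr_sumr.
by apply: eq_bigr => j _; rewrite mulrA mulr1.
Qed.

Lemma wsq_delta F i0 j0 : wsq F (delta_mx i0 j0) = F i0 j0.
Proof.
rewrite /wsq (bigD1 i0) //= [X in _ + X]big1 ?addr0 => [|i ne_i].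
  rewrite (bigD1 j0) //= !mxE !eqxx expr1n mulr1 big1 ?addr0 // => j ne_j.
  by rewrite mxE eqxx (negbTE ne_j) expr0n mulr0.
by apply: big1 => j _; rewrite mxE (negbTE ne_i) expr0n mulr0.
Qed.

Lemma wsq_delta2 F t i1 j1 i2 j2 : j1 != j2 ->
  wsq F (t *: (delta_mx i1 j1 - delta_mx i2 j2)) = t ^+ 2 * (F i1 j1 + F i2 j2).
Proof.
move=> ne_j; transitivity (wsq (fun i j => t ^+ 2 * F i j) (delta_mx i1 j1)
                          + wsq (fun i j => t ^+ 2 * F i j) (delta_mx i2 j2)).
  rewrite /wsq -big_split; apply: eq_bigr => i _; rewrite -big_split.
  apply: eq_bigr => j _ /=; rewrite !mxE.
  have : ~~ ((j == j1) && (j == j2)) by apply: contra ne_j => /andP[/eqP <- /eqP <-].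
  by case: (j == j1); case: (j == j2); case: (i == i1); case: (i == i2) => //= _; ring.
by rewrite !wsq_delta mulrDr.
Qed.

End QuadraticForms.

Lemma sum_pairs_le (R : realDomainType) n (f g : 'I_n -> 'I_n -> R) :
  (forall a b, f a b + f b a <= g a b + g b a) ->
  \sum_(a < n) \sum_(b < n) f a b <= \sum_(a < n) \sum_(b < n) g a b.
Proof.
have sym2 (h : 'I_n -> 'I_n -> R) :
    \sum_(a < n) \sum_(b < n) (h a b + h b a) = 2 * \sum_(a < n) \sum_(b < n) h a b.
  under eq_bigr do rewrite big_split /=.
  by rewrite big_split /= [X in _ + X]exchange_big /= -mulr2n mulr_natl.
move=> le_fg; rewrite -(ler_pM2l (ltr0Sn R 1)) -!sym2.
by apply: ler_sum => a _; apply: ler_sum => b _; exact: le_fg.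
Qed.

Lemma ge_mul_ge1 (R : realDomainType) (x y d : R) : 1 <= x -> 0 <= d -> d <= y -> d <= x * y.
Proof. by move=> x_ge1 d_ge0 le_dy; nra. Qed.

Section LambdaMin.
Variables (R : realType) (Nd r : nat) (M : 'M[R]_Nd) (X : 'M[R]_(Nd, r)).

Let unit_tangent U := tangent X U /\ frob_norm U = 1.

Lemma lambda_min_hess_le c U :
  (forall V, unit_tangent V -> c <= hess_g M X V) ->
  unit_tangent U -> lambda_min_hess M X <= hess_g M X U.
Proof.
move=> c_lb UT; apply: ge_inf; last by exists U.
by exists c => _ [V VT <-]; exact: c_lb.
Qed.

Lemma lambda_min_hess_ge c :
  (exists U, unit_tangent U) ->
  (forall U, unit_tangent U -> c <= hess_g M X U) -> c <= lambda_min_hess M X.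
Proof.
move=> [U UT] c_lb; apply: lb_le_inf; first by exists (hess_g M X U), U.
by move=> _ [V VT <-]; exact: c_lb.
Qed.

End LambdaMin.

Lemma sum_sqr_trace (R : realType) m n (A : 'M[R]_(m, n)) :
  \sum_(i < m) \sum_(j < n) A i j ^+ 2 = \tr (A^T *m A).
Proof.
rewrite /mxtrace exchange_big /=; apply: eq_bigr => j _; rewrite !mxE.
by apply: eq_bigr => i _; rewrite !mxE expr2.
Qed.

Lemma frob_norm_orth (R : realType) m n (Q : 'M[R]_m) (A : 'M[R]_(m, n)) :
  Q^T *m Q = 1%:M -> frob_norm (Q *m A) = frob_norm A.
Proof.
by move=> QtQ; rewrite /frob_norm !sum_sqr_trace trmx_mul -mulmxA (mulmxA Q^T) QtQ mul1mx.
Qed.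

Section EigenCoordinates.
Variables (R : realType) (Nd r : nat) (M : 'M[R]_Nd) (lam : 'I_Nd -> R).
Variables (P : 'M[R]_Nd) (idx : 'I_r -> 'I_Nd).
Hypothesis M_sym : M^T = M.
Hypothesis P_orth : P^T *m P = 1%:M.
Hypothesis MP_eig : M *m P = P *m diag_mx (\row_k lam k).
Hypothesis idx_inj : injective idx.

Local Notation X := (X_Omega P idx).

Definition sel : 'M[R]_(Nd, r) := \matrix_(k, b) (k == idx b)%:R.

Lemma X_Omega_sel : X = P *m sel.
Proof.
apply/matrixP => a b; rewrite !mxE (bigD1 (idx b)) //= !mxE eqxx mulr1 big1 ?addr0 //.
by move=> k /negbTE ne_k; rewrite mxE ne_k mulr0.
Qed.

Lemma sel_tr_mul (C : 'M[R]_(Nd, r)) a b : (sel^T *m C) a b = C (idx a) b.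
Proof.
rewrite !mxE (bigD1 (idx a)) //= !mxE eqxx mul1r big1 ?addr0 // => k ne_k.
by rewrite !mxE (negbTE ne_k) mul0r.
Qed.

Lemma eigen_coords (U : 'M[R]_(Nd, r)) : U = P *m (P^T *m U).
Proof. by rewrite mulmxA (mulmx1C P_orth) mul1mx. Qed.

(* The weights of N and the coefficients of the Hessian in eigen-coordinates:
   hess g(X_Omega)[P C, P C] = sum_(k,b) (r - b) (lam_(idx b) - lam_k) C_kb^2. *)
Definition weight (b : 'I_r) : R := (r - b)%:R.
Definition hcoef (k : 'I_Nd) (b : 'I_r) : R := weight b * (lam (idx b) - lam k).

Lemma Xt_M_X : X^T *m M *m X = diag_mx (\row_b lam (idx b)).
Proof.
rewrite X_Omega_sel trmx_mul !mulmxA -(mulmxA _ M P) MP_eig mulmxA.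
rewrite -(mulmxA _ P^T P) P_orth mulmx1 -mulmxA; apply/matrixP => a b.
by rewrite sel_tr_mul mul_diag_mx !mxE (inj_eq idx_inj) eq_sym mulr_natr.
Qed.

Lemma hess_first (C : 'M[R]_(Nd, r)) :
  frob (X^T *m M *m X) ((P *m C)^T *m (P *m C) *m Nw R r)
  = \sum_(b < r) lam (idx b) * (\sum_(k < Nd) C k b ^+ 2) * weight b.
Proof.
rewrite /frob Xt_M_X tr_diag_mx trmx_mul -(mulmxA C^T) (mulmxA P^T) P_orth mul1mx.
rewrite mul_diag_mx /Nw mul_mx_diag /mxtrace; apply: eq_bigr => b _; rewrite !mxE.
by rewrite mulrA; congr (_ * _ * _); apply: eq_bigr => k _; rewrite !mxE expr2.
Qed.

Lemma hess_second (C : 'M[R]_(Nd, r)) :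
  frob M ((P *m C) *m Nw R r *m (P *m C)^T)
  = \sum_(k < Nd) lam k * \sum_(b < r) C k b ^+ 2 * weight b.
Proof.
rewrite /frob M_sym trmx_mul !mulmxA MP_eig mxtrace_mulC !mulmxA P_orth mul1mx.
rewrite -!mulmxA mul_diag_mx /mxtrace; apply: eq_bigr => k _; rewrite !mxE.
congr (_ * _); apply: eq_bigr => b _; rewrite !mxE /Nw (bigD1 b) //= !mxE eqxx mulr1n.
rewrite big1 ?addr0; first by rewrite /weight; ring.
by move=> j ne_j; rewrite !mxE eq_sym (negbTE ne_j) mulr0n mul0r.
Qed.

Lemma hess_coord (C : 'M[R]_(Nd, r)) : hess_g M X (P *m C) = wsq hcoef C.
Proof.
rewrite /hess_g hess_first hess_second /wsq /hcoef.
under [RHS]eq_bigr do under eq_bigr do rewrite mulrBr mulrBl.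
under [RHS]eq_bigr do rewrite sumrB.
rewrite sumrB exchange_big /=; congr (_ - _); apply: eq_bigr => i _.
- by rewrite big_distrr big_distrl /=; apply: eq_bigr => k _; ring.
- by rewrite big_distrr /=; apply: eq_bigr => b _; ring.
Qed.

Definition coord_tangent (C : 'M[R]_(Nd, r)) := forall a b, C (idx a) b + C (idx b) a = 0.

Lemma tangent_coord (C : 'M[R]_(Nd, r)) : tangent X (P *m C) <-> coord_tangent C.
Proof.
rewrite /tangent X_Omega_sel /= !trmx_mul -!mulmxA !(mulmxA P^T) P_orth !mul1mx.
have sel_tr_mulr a b : (C^T *m sel) a b = C (idx b) a.
  by rewrite -[sel in C^T *m sel]trmxK -trmx_mul mxE sel_tr_mul.
have addE (A B : 'M[R]_r) a b : (A + B) a b = A a b + B a b by rewrite mxE.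
split => [/matrixP tg a b | tg].
  by have := tg a b; rewrite addE sel_tr_mul sel_tr_mulr mxE.
by apply/matrixP => a b; rewrite addE sel_tr_mul sel_tr_mulr tg mxE.
Qed.

Lemma unit_coord (C : 'M[R]_(Nd, r)) :
  frob_norm (P *m C) = 1 <-> wsq (fun _ _ => 1) C = 1.
Proof.
have sq_ge0 : 0 <= wsq (fun _ _ => 1) C.
  by apply: sumr_ge0 => k _; apply: sumr_ge0 => b _; rewrite mul1r sqr_ge0.
rewrite frob_norm_orth // frob_normE; split => [sqrt1 | ->]; last exact: sqrtr1.
by rewrite -(sqr_sqrtr sq_ge0) sqrt1 expr1n.
Qed.

(* The two sides of lambda_min in eigen-coordinates.  The Hessian values are
   bounded below since every coefficient is at least - sum |hcoef|. *)
Lemma lambda_min_coord_le (C : 'M[R]_(Nd, r)) :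
  coord_tangent C -> wsq (fun _ _ => 1) C = 1 -> lambda_min_hess M X <= wsq hcoef C.
Proof.
move=> tg unitC; rewrite -hess_coord.
apply: (@lambda_min_hess_le _ _ _ _ _ (- \sum_k \sum_b `|hcoef k b|)); last first.
  by rewrite tangent_coord unit_coord.
move=> V []; rewrite [V]eigen_coords tangent_coord unit_coord hess_coord => _ unitV.
rewrite -[X in X <= _]mulr1 -unitV wsq_scale; apply: wsq_le_coef => k b; rewrite lerNl.
apply: le_trans (ler_norm _) _; rewrite normrN.
rewrite (bigD1 k) //= (bigD1 b) //= -addrA lerDl.
by rewrite addr_ge0 // !sumr_ge0 // => *; exact: sumr_ge0.
Qed.

Lemma lambda_min_coord_ge c :
  (exists C, coord_tangent C /\ wsq (fun _ _ => 1) C = 1) ->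
  (forall C, coord_tangent C -> wsq (fun _ _ => 1) C = 1 -> c <= wsq hcoef C) ->
  c <= lambda_min_hess M X.
Proof.
move=> [C [tg unitC]] c_lb; apply: lambda_min_hess_ge.
  by exists (P *m C); rewrite tangent_coord unit_coord.
move=> V []; rewrite [V]eigen_coords tangent_coord unit_coord hess_coord.
exact: c_lb.
Qed.

End EigenCoordinates.

Section Selections.
Variables (Nd r : nat) (idx : 'I_r -> 'I_Nd).
Hypothesis idx_inj : injective idx.

Lemma sum_selection (R : realType) (G : 'I_Nd -> R) :
  \sum_(k < Nd) G k =
  \sum_(a < r) G (idx a) + \sum_(k < Nd | k \notin (idx @: [set: 'I_r])%SET) G k.
Proof.
rewrite (bigID (mem (idx @: [set: 'I_r])%SET)) /=; congr (_ + _).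
rewrite big_imset /=; last by move=> x y _ _; exact: idx_inj.
by apply: eq_bigl => a; rewrite inE.
Qed.

(* Pigeonhole, both ways: the r selected indices lie below r iff they
   exhaust {0, ..., r-1}. *)
Lemma below_onto : (forall b, (idx b < r)%N) ->
  forall k : 'I_Nd, (k < r)%N -> exists b, idx b = k.
Proof.
move=> below k lt_kr; pose f b := Ordinal (below b).
have f_inj : injective f by move=> x y /(congr1 val) /= /ord_inj /idx_inj.
have [g fK gK] := injF_bij f_inj.
by exists (g (Ordinal lt_kr)); apply: val_inj; rewrite /= -[val (idx _)]/(val (f _)) gK.
Qed.

Lemma onto_below : (forall k : 'I_Nd, (k < r)%N -> exists b, idx b = k) ->
  forall b, (idx b < r)%N.
Proof.
move=> onto; have [le_rN|lt_Nr] := leqP r Nd; last by move=> b; apply: ltn_trans lt_Nr.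
have [h idx_h] := fin_all_exists (fun k : 'I_r => onto (widen_ord le_rN k) (ltn_ord k)).
have h_inj : injective h by move=> x y /(congr1 idx); rewrite !idx_h => /(congr1 val) /= /ord_inj.
have [h' hK h'K] := injF_bij h_inj.
by move=> b; rewrite -(h'K b) idx_h /=.
Qed.

Lemma selection_inversion : (forall b, (idx b < r)%N) ->
  ~ (forall b : 'I_r, val (idx b) = val b) ->
  exists a b : 'I_r, (a < b)%N /\ (idx b < idx a)%N.
Proof.
move=> below not_id; apply: contrapT => no_inv; apply: not_id => b.
pose f b := Ordinal (below b).
suff : f b = b by move/(congr1 val).
apply: ord_incr_id => x y lt_xy /=; rewrite ltnNge leq_eqVlt negb_or.
apply/andP; split.
  by apply: contraTneq lt_xy => /val_inj /idx_inj ->; rewrite ltnn.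
by apply/negP => lt_yx; apply: no_inv; exists x, y.
Qed.

End Selections.

Section SpectralGap.
Variables (R : realType) (Nd r : nat) (lam : 'I_Nd -> R).
Hypothesis lam_noninc : forall i j : 'I_Nd, (i <= j)%N -> lam j <= lam i.

Let gaps := [set d : R | exists s j : 'I_Nd, [/\ (s < j)%N, (j <= r)%N & d = lam s - lam j]].

Lemma gaps_ge0 : lbound gaps 0.
Proof. by move=> _ [s [j [lt_sj _ ->]]]; rewrite subr_ge0 lam_noninc // ltnW. Qed.

Lemma d_min_le (s j : 'I_Nd) : (s < j)%N -> (j <= r)%N -> d_min r lam <= lam s - lam j.
Proof.
by move=> lt_sj le_jr; apply: ge_inf; [exists 0; exact: gaps_ge0 | exists s, j].
Qed.

Lemma d_min_ge0 : (0 < r)%N -> (r < Nd)%N -> 0 <= d_min r lam.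
Proof.
move=> r_gt0 lt_rN; have lt_0N : (0 < Nd)%N by apply: leq_ltn_trans lt_rN.
apply: lb_le_inf; last exact: gaps_ge0.
by exists (lam (Ordinal lt_0N) - lam (Ordinal lt_rN)), (Ordinal lt_0N), (Ordinal lt_rN).
Qed.

End SpectralGap.

Lemma weight_ge1 (R : realType) r (b : 'I_r) : 1 <= weight R b.
Proof. by rewrite /weight (_ : 1 = 1%:R) // ler_nat; have := ltn_ord b; lia. Qed.

Lemma weight_gap (R : realType) r (a b : 'I_r) : (a < b)%N -> 1 <= weight R a - weight R b.
Proof.
move=> lt_ab; rewrite lerBrDr (_ : 1 = 1%:R) // -natrD ler_nat.
by have := ltn_ord b; lia.
Qed.

Section CriticalPoints.
Variables (R : realType) (Nd r : nat) (M : 'M[R]_Nd) (lam : 'I_Nd -> R).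
Variables (P : 'M[R]_Nd) (idx : 'I_r -> 'I_Nd).
Hypothesis M_sym : M^T = M.
Hypothesis P_orth : P^T *m P = 1%:M.
Hypothesis MP_eig : M *m P = P *m diag_mx (\row_k lam k).
Hypothesis idx_inj : injective idx.
Hypothesis lam_noninc : forall i j : 'I_Nd, (i <= j)%N -> lam j <= lam i.
Hypothesis r_gt0 : (0 < r)%N.
Hypothesis lt_rN : (r < Nd)%N.

Local Notation X := (X_Omega P idx).
Local Notation d := (d_min r lam).
Local Notation hcoef := (hcoef lam idx).
Local Notation weight := (weight R).

Let d_ge0 : 0 <= d := d_min_ge0 lam_noninc r_gt0 lt_rN.
Let lambda_min_le := lambda_min_coord_le M_sym P_orth MP_eig idx_inj.

Lemma hcoef_pair a b :
  hcoef (idx a) b + hcoef (idx b) a = (weight a - weight b) * (lam (idx a) - lam (idx b)).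
Proof. by rewrite /hcoef; ring. Qed.

(* Case (1, ..., r): every unit tangent direction has curvature at least d/2.
   Selected entries come in antisymmetric pairs, each gaining a weight gap
   times an eigenvalue gap; unselected entries gain lam_b - lam_k >= d. *)
Lemma in_order_lb : (forall b, val (idx b) = val b) -> (1/2) * d <= lambda_min_hess M X.
Proof.
move=> idx_val; have idx_id b : nat_of_ord (idx b) = b := idx_val b.
apply: (lambda_min_coord_ge M_sym P_orth MP_eig idx_inj).
  exists (delta_mx (Ordinal lt_rN) (Ordinal r_gt0)); split; last exact: wsq_delta.
  move=> a b; rewrite !mxE -!val_eqE /= !idx_id.
  by rewrite !(ltn_eqF (ltn_ord _)) /= addr0.
move=> C tg unitC; rewrite -[X in X <= _]mulr1 -[X in _ * X <= _]unitC wsq_scale.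
rewrite /wsq !(sum_selection idx_inj).
apply: lerD.
  apply: sum_pairs_le => a b; have Cba : C (idx b) a = - C (idx a) b.
    by apply/eqP; rewrite -addr_eq0 addrC tg.
  have pair_ge (x y : 'I_r) : (x < y)%N -> d <= hcoef (idx x) y + hcoef (idx y) x.
    move=> lt_xy; rewrite hcoef_pair; apply: ge_mul_ge1 (weight_gap _ lt_xy) d_ge0 _.
    by apply: (d_min_le lam_noninc); rewrite !idx_id // ltnW.
  have half2 : 1/2 * d + 1/2 * d = d by field.
  rewrite Cba sqrrN -mulrDl half2 -mulrDl.
  have [lt_ab|lt_ba|/val_inj eq_ab] := ltngtP a b.
  - by rewrite ler_wpM2r ?sqr_ge0 ?pair_ge.
  - by rewrite ler_wpM2r ?sqr_ge0 // addrC pair_ge.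
  - have Caa : C (idx a) a = 0 by have := tg a a; lra.
    by rewrite -eq_ab Caa expr0n /= !mulr0.
apply: ler_sum => k unsel; apply: ler_sum => b _; apply: ler_wpM2r; first exact: sqr_ge0.
have le_rk : (r <= k)%N.
  rewrite leqNgt; apply: contra unsel => lt_kr; apply/imsetP.
  by exists (Ordinal lt_kr); rewrite ?in_setT //; apply: ord_inj; rewrite idx_id.
have d_le : d <= lam (idx b) - lam k.
  apply: le_trans (d_min_le lam_noninc (s := idx b) (j := Ordinal lt_rN) _ _) _ => //=.
    by rewrite idx_id.
  by rewrite lerD2l lerN2 lam_noninc.
have := ge_mul_ge1 (weight_ge1 R b) d_ge0 d_le; have := d_ge0; rewrite /hcoef; lra.
Qed.

(* Case of a wrong order on {1, ..., r}: an inversion a < b, idx b < idx a,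
   is a direction of curvature at most -d/2, namely the normalised
   antisymmetric pair e_(idx a) e_b^T - e_(idx b) e_a^T. *)
Lemma permuted_ub : idx @` setT = [set i : 'I_Nd | (i < r)%N] ->
  ~ (forall b : 'I_r, val (idx b) = val b) -> lambda_min_hess M X <= - ((1/2) * d).
Proof.
move=> onto not_id; have below b : (idx b < r)%N.
  by have : [set i : 'I_Nd | (i < r)%N] (idx b) by rewrite -onto; exists b.
have [a [b [lt_ab lt_ba]]] := selection_inversion idx_inj below not_id.
have ne_ba : b != a by rewrite neq_ltn lt_ab orbT.
pose t : R := Num.sqrt (1/2).
have t2 : t ^+ 2 = 1/2 by rewrite sqr_sqrtr // divr_ge0.
pose C := t *: (delta_mx (idx a) b - delta_mx (idx b) a).
apply: (le_trans (lambda_min_le (C := C) _ _)).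
- move=> x y; rewrite !mxE !(inj_eq idx_inj).
  by rewrite [(y == a) && _]andbC [(y == b) && _]andbC; ring.
- by rewrite wsq_delta2 // t2; field.
rewrite wsq_delta2 // t2 hcoef_pair.
have gap : d <= (weight a - weight b) * (lam (idx b) - lam (idx a)).
  apply: ge_mul_ge1 (weight_gap _ lt_ab) d_ge0 _.
  by apply: (d_min_le lam_noninc) => //; exact: ltnW.
have := d_ge0; nra.
Qed.

(* Case of a selection missing some k0 <= r: it then contains some idx b0 > r,
   and moving column b0 to the eigenvector x_k0 has curvature at most -d. *)
Lemma unselected_ub : idx @` setT <> [set i : 'I_Nd | (i < r)%N] ->
  lambda_min_hess M X <= - d.
Proof.
move=> not_onto.
have [b0 le_rb0] : exists b0, (r <= idx b0)%N.
  apply: contrapT => none; apply: not_onto.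
  have below b : (idx b < r)%N by rewrite ltnNge; apply/negP => le_rb; apply: none; exists b.
  apply/seteqP; split => [_ [b _ <-] | k /= lt_kr]; first exact: below.
  by have [b <-] := below_onto idx_inj below lt_kr; exists b.
have [k0 [lt_k0r k0_out]] : exists k0 : 'I_Nd, (k0 < r)%N /\ forall a, idx a != k0.
  apply: contrapT => none.
  suff: (idx b0 < r)%N by rewrite ltnNge le_rb0.
  have onto (k : 'I_Nd) : (k < r)%N -> exists b, idx b = k.
    move=> lt_kr; apply: contrapT => miss; apply: none.
    by exists k; split => // a; apply/eqP => eq_ak; apply: miss; exists a.
  exact: onto_below onto b0.
apply: (le_trans (lambda_min_le (C := delta_mx k0 b0) _ _)).
- by move=> x y; rewrite !mxE (negbTE (k0_out x)) (negbTE (k0_out y)) /= addr0.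
- exact: wsq_delta.
rewrite wsq_delta /hcoef.
have gap : d <= lam k0 - lam (idx b0).
  apply: le_trans (d_min_le lam_noninc (s := k0) (j := Ordinal lt_rN) _ _) _ => //.
  by rewrite lerD2l lerN2 lam_noninc.
have := ge_mul_ge1 (weight_ge1 R b0) d_ge0 gap; lra.
Qed.

End CriticalPoints.

Unset Implicit Arguments.

Theorem mainTheorem4 (R : realType) (Nd r : nat)
  (M : 'M[R]_Nd) (lam : 'I_Nd -> R) (P : 'M[R]_Nd) (idx : 'I_r -> 'I_Nd) :
  (0 < r)%N -> (r < Nd)%N ->
  M^T = M ->
  (* orthonormal eigenvectors x_1..x_N (columns of P) with M x_k = lam_k x_k *)
  P^T *m P = 1%:M ->
  M *m P = P *m diag_mx (\row_k lam k) ->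
  (* lam_1 > ... > lam_r > lam_{r+1} >= ... >= lam_N *)
  (forall i j : 'I_Nd, (i < j)%N -> (i < r)%N -> lam j < lam i) ->
  (forall i j : 'I_Nd, (i <= j)%N -> lam j <= lam i) ->
  (* i_1, ..., i_r distinct *)
  injective idx ->
  [/\ ((forall b : 'I_r, val (idx b) = val b) ->
         lambda_min_hess M (X_Omega P idx) >= (1/2) * d_min r lam),
      (idx @` setT = [set i : 'I_Nd | (i < r)%N] ->
       ~ (forall b : 'I_r, val (idx b) = val b) ->
         lambda_min_hess M (X_Omega P idx) <= - ((1/2) * d_min r lam))
    & (idx @` setT <> [set i : 'I_Nd | (i < r)%N] ->
         lambda_min_hess M (X_Omega P idx) <= - d_min r lam)].
Proof.
move=> r_gt0 lt_rN M_sym P_orth MP_eig _ lam_noninc idx_inj; split.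
- by apply: in_order_lb.
- by apply: permuted_ub.
- by apply: unselected_ub.
Qed.
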